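(* Let $A$ be a finite abelian group having no element of order $4$ and such that $H = Q_8 \times A$ is a hamiltonian group. Let $d$ be the number of elementary divisors of $A$. Then $\mathrm{fix}(H) = \{1,2,\ldots,d+1\}$.
   Context: All graphs are finite, simple and undirected, and all groups are finite. A non-abelian group is hamiltonian if every one of its subgroups is normal. $Q_8$ is the quaternion group of order $8$. The elementary divisors of a finite abelian group are the prime-power orders of the cyclic factors in its decomposition as a direct product of cyclic groups of prime-power order (counted with multiplicity). For a graph $\Gamma$ and $S \subseteq V(\Gamma)$, $\mathrm{stab}(S)=\{g\in \mathrm{Aut}\,\Gamma : g(s)=s \text{ for all } s\in S\}$; the fixing number of $\Gamma$ is the minimum $|S|$ with $\mathrm{stab}(S)$ trivial. For a finite group $G$, $\mathrm{fix}(G)$ is the set of all fixing numbers of graphs $\Gamma$ with $\mathrm{Aut}\,\Gamma\cong G$. *)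

From HB Require Import structures.
From mathcomp Require Import all_boot all_fingroup all_solvable.
Set Implicit Arguments. Unset Strict Implicit. Unset Printing Implicit Defensive.
Local Open Scope group_scope.

Definition simple_graph (V : finType) (e : rel V) : Prop :=
  symmetric e /\ irreflexive e.

Definition aut_set (V : finType) (e : rel V) : {set {perm V}} :=
  [set g : {perm V} | [forall x, forall y, e (g x) (g y) == e x y]].

Lemma aut_group_set (V : finType) (e : rel V) : group_set (aut_set e).
Proof.
apply/group_setP; split.
  by rewrite inE; apply/forallP=> x; apply/forallP=> y; rewrite !perm1.
move=> g h; rewrite !inE => /forallP Hg /forallP Hh.
apply/forallP=> x; apply/forallP=> y; rewrite !permM.
by rewrite (eqP (forallP (Hh (g x)) (g y))) (eqP (forallP (Hg x) y)).
Qed.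

Canonical aut_group (V : finType) (e : rel V) := Group (aut_group_set e).

Definition stab (V : finType) (e : rel V) (S : {set V}) : {set {perm V}} :=
  [set g in aut_set e | [forall s in S, g s == s]].

Definition fixing_number (V : finType) (e : rel V) (k : nat) : Prop :=
  (exists S : {set V}, stab e S = 1 /\ #|S| = k) /\
  (forall S : {set V}, stab e S = 1 -> k <= #|S|).

Definition fix_set (gT : finGroupType) (G : {group gT}) (k : nat) : Prop :=
  exists (V : finType) (e : rel V),
    simple_graph e /\ aut_group e \isog G /\ fixing_number e k.

Definition hamiltonian (gT : finGroupType) (H : {group gT}) : Prop :=
  ~~ abelian H /\ forall K : {group gT}, K \subset H -> K <| H.

Definition num_elementary_divisors (gT : finGroupType) (A : {group gT})
    (d : nat) : Prop :=
  exists C : 'I_d -> {group gT},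
    \big[dprod/1]_(i < d) C i = A /\
    forall i, cyclic (C i) /\ exists p k, prime p /\ #|C i| = (p ^ k.+1)%N.

From mathcomp Require Import all_boot all_fingroup all_solvable.
Set Implicit Arguments. Unset Strict Implicit. Unset Printing Implicit Defensive.
Local Open Scope group_scope.

(* Upper bound: in a minimum fixing set S every s is moved by some z_s of
   prime order fixing S :\ s.  In a hamiltonian group each <[z_s]> is normal,
   and z_s lies outside the stabiliser of s, which contains every other z_t;
   so the z_s generate a subgroup of 'Ohm_1(H) of order \prod_s #[z_s].  As
   #|'Ohm_1(Q_8 \x A)| is a product of d + 1 primes, #|S| <= d + 1.
   Lower bound: regrouping H = Q_8 \x C_1 \x ... \x C_d into k nontrivial
   factors gives normal subgroups N_1, ..., N_k with H isomorphic to the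
   product of the H / N_j.  The graph has a vertex for each coset N_j u and,
   for each ordered pair of cosets N_j u, N_j v, a gadget whose length encodes
   N_j u v^-1.  Right multiplication by H preserves these colours; the coset
   vertices are exactly the vertices of degree >= 4, so every automorphism
   preserves colours and is determined by the images of the cosets N_j.
   Hence Aut = H, the k vertices N_j form a fixing set, and a set missing
   block j is fixed by a nontrivial element of all the N_i, i != j. *)

(** * Fixing numbers and the first Omega subgroup *)

Lemma leq_size_prime_prod (l1 l2 : seq nat) : all prime l1 -> all prime l2 ->
  (\prod_(p <- l1) p %| \prod_(p <- l2) p)%N -> size l1 <= size l2.
Proof.
elim: l1 l2 => [|p l1 IH] l2 //= /andP[pp pl1] pl2; rewrite big_cons => dv.
have pl2p : p \in l2.
  have: (p %| \prod_(q <- l2) q)%N by apply: dvdn_trans dv; apply: dvdn_mulr.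
  rewrite Euclid_dvd_prod // big_has => /hasP[q ql2 /=].
  by rewrite dvdn_prime2 // ?(allP pl2) // => /eqP->.
have pe := perm_to_rem pl2p.
rewrite (perm_big _ pe) big_cons dvdn_pmul2l ?prime_gt0 // in dv.
rewrite (perm_size pe) /= ltnS; apply: IH => //.
by apply/allP=> q /mem_rem; apply: (allP pl2).
Qed.

Lemma card_gen_prime_independent (gT : finGroupType) (G : {group gT})
    (I : finType) (z : I -> gT) (C : I -> {group gT}) (S : {set I}) :
  {in S, forall i, [/\ z i \in G, prime #[z i] & <[z i]> <| G]} ->
  {in S &, forall i j, j != i -> z j \in C i} ->
  {in S, forall i, z i \notin C i} ->
  #|<<z @: S>>| = (\prod_(i in S) #[z i])%N.
Proof.
have [n ltSn] := ubnP #|S|; elim: n S ltSn => // n IH S ltSn zS zC znC.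
have [->|[i Si]] := set_0Vmem S; first by rewrite imset0 gen0 cards1 big_set0.
have [Gi pi /andP[_ nGi]] := zS i Si.
set S' := S :\ i; have S'S : S' \subset S by apply: subsetDl.
have ltS'n : #|S'| < n by rewrite -ltnS (leq_trans _ ltSn) // [#|S|](cardsD1 i) Si.
have sS'S := subsetP S'S.
have oS' := IH S' ltS'n (sub_in1 sS'S zS) (sub_in2 sS'S zC) (sub_in1 sS'S znC).
have sS'C : <<z @: S'>> \subset C i.
  rewrite gen_subG; apply/subsetP=> _ /imsetP[j /setD1P[ji Sj] ->].
  exact: zC.
have sS'G : <<z @: S'>> \subset G.
  by rewrite gen_subG; apply/subsetP=> _ /imsetP[j /(subsetP S'S) Sj ->]; case: (zS j Sj).
have -> : <<z @: S>> = <<z @: S'>> * <[z i]>.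
  rewrite -norm_joinEl ?(subset_trans sS'G) // joing_idl joing_idr.
  by rewrite joingE -imset_set1 -imsetU setUC setD1K.
rewrite TI_cardMg; first by rewrite oS' (big_setD1 i Si) mulnC -orderE.
rewrite setIC prime_TIg -?orderE // cycle_subG.
by apply: contra (znC i Si); apply: (subsetP sS'C).
Qed.

Section Stabilizer.
Variables (V : finType) (e : rel V).

Lemma stabP (S : {set V}) g :
  reflect (g \in aut_set e /\ {in S, forall s, g s = s}) (g \in stab e S).
Proof.
rewrite /stab in_set; apply: (iffP andP) => [[Ag /forall_inP gS]|[Ag gS]]; split=> //.
  by move=> s /gS/eqP.
by apply/forall_inP=> s /gS->.
Qed.

Lemma stab_group_set (S : {set V}) : group_set (stab e S).
Proof.
apply/group_setP; split.
  by apply/stabP; split=> [|s _]; [exact: group1 | rewrite perm1].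
move=> g h /stabP[Ag gS] /stabP[Ah hS]; apply/stabP; split.
  exact: (groupM (G := aut_group e)).
by move=> s Ss; rewrite permM gS ?hS.
Qed.

Canonical stab_group (S : {set V}) := Group (stab_group_set S).

Lemma stab_sub_aut (S : {set V}) : stab e S \subset aut_group e.
Proof. by apply/subsetP=> g /stabP[]. Qed.

Lemma stabS (S T : {set V}) : S \subset T -> stab e T \subset stab e S.
Proof.
move=> sST; apply/subsetP=> g /stabP[Ag gT]; apply/stabP; split=> // s Ss.
exact/gT/(subsetP sST).
Qed.

Lemma stab0 : stab e set0 = aut_set e.
Proof. by apply/setP=> g; apply/stabP/idP=> [[]|] // Ag; split=> // s; rewrite inE. Qed.

Lemma fixing_number_moved k (S : {set V}) s :
  fixing_number e k -> stab e S = 1 -> #|S| = k -> s \in S ->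
  exists2 z, z \in stab e (S :\ s) & prime #[z] && (z s != s).
Proof.
move=> [_ minS] stS1 oS Ss.
have [stD1|[p p_pr p_dvd]] := trivgVpdiv (stab_group (S :\ s)).
  by have := minS _ stD1; rewrite -oS (cardsD1 s S) Ss add1n ltnn.
have [z Dz oz] := Cauchy p_pr p_dvd; exists z => //; rewrite oz p_pr /=.
apply: contraTneq p_pr => zs; have /stabP[Az zD] := Dz.
have: z \in stab e S.
  apply/stabP; split=> // t St; have [->|ts] := eqVneq t s; first exact: zs.
  by apply: zD; rewrite !inE ts.
by rewrite stS1 -oz => /set1P->; rewrite order1.
Qed.

Lemma fixing_number_leq_Ohm1 (ps : seq nat) k :
  (forall K : {group {perm V}}, K \subset aut_group e -> K <| aut_group e) ->
  all prime ps -> #|'Ohm_1(aut_group e)| = (\prod_(p <- ps) p)%N ->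
  fixing_number e k -> k <= size ps.
Proof.
move=> nK_G ps_pr oOhm1 fixk; have [[S [stS1 oS]] _] := fixk.
have /fin_all_exists[z zP] : forall s, exists zs : {perm V}, s \in S ->
    zs \in stab e (S :\ s) /\ prime #[zs] && (zs s != s).
  move=> s; have [Ss|_] := boolP (s \in S); last by exists 1.
  by have [y ? ?] := fixing_number_moved fixk stS1 oS Ss; exists y.
have zG s : s \in S -> z s \in aut_group e.
  by case/zP=> /(subsetP (stab_sub_aut _)).
have oZ : #|<<z @: S>>| = (\prod_(s in S) #[z s])%N.
  apply: (card_gen_prime_independent (G := aut_group e) (C := fun s => stab_group [set s])).
  - move=> s Ss; have [_ /andP[pr _]] := zP s Ss.
    by rewrite zG ?nK_G ?cycle_subG ?zG.
  - move=> s t Ss Tt ts; have [zD _] := zP t Tt.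
    by apply: subsetP zD; rewrite stabS // sub1set !inE eq_sym ts.
  - move=> s Ss; have [_ /andP[_ zs]] := zP s Ss.
    by apply: contra zs => /stabP[_ ->] //; rewrite inE.
have: (\prod_(s in S) #[z s] %| \prod_(p <- ps) p)%N.
  rewrite -oZ -oOhm1; apply: cardSg.
  rewrite /= Ohm1Eprime genS //.
  apply/subsetP=> _ /imsetP[s Ss ->]; have [_ /andP[pr _]] := zP s Ss.
  by rewrite inE zG.
rewrite -oS -(size_image (fun s => #[z s])) -(big_image _ _ _ _ id).
move/leq_size_prime_prod; apply=> //.
by apply/allP=> _ /imageP[s Ss ->]; case/zP: Ss => _ /andP[].
Qed.

End Stabilizer.

Lemma isog_all_normal (gT rT : finGroupType) (G : {group gT}) (H : {group rT}) :
  G \isog H -> (forall K : {group rT}, K \subset H -> K <| H) ->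
  forall K : {group gT}, K \subset G -> K <| G.
Proof.
case/isogP=> f injf imf nsH K sKG; rewrite -(injm_normal injf sKG) // imf.
by apply: nsH; rewrite -imf morphimS.
Qed.

Lemma fix_set_leq_Ohm1 (gT : finGroupType) (H : {group gT}) (ps : seq nat) k :
  (forall K : {group gT}, K \subset H -> K <| H) ->
  all prime ps -> #|'Ohm_1(H)| = (\prod_(p <- ps) p)%N ->
  fix_set H k -> k <= size ps.
Proof.
move=> nsH ps_pr oOhm1 [V [e [_ [isoAH fixk]]]].
apply: (fixing_number_leq_Ohm1 _ ps_pr _ fixk); first exact: isog_all_normal isoAH nsH.
by rewrite (card_isog (gFisog _ isoAH)).
Qed.

Lemma fix_set_gt0 (gT : finGroupType) (H : {group gT}) k :
  H :!=: 1 -> fix_set H k -> 0 < k.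
Proof.
move=> ntH [V [e [_ [isoAH [[S [stS1 oS]] _]]]]]; rewrite lt0n.
apply: contraNneq ntH => k0; have S0 : S = set0 by apply/eqP; rewrite -cards_eq0 oS k0.
by rewrite trivg_card1 -(card_isog isoAH) /= -stab0 -S0 stS1 cards1.
Qed.

(** * The first Omega subgroup of Q_8 \x A *)

Lemma prime_power_group_nontrivial (gT : finGroupType) (G : {group gT}) p k :
  prime p -> #|G| = (p ^ k.+1)%N -> G :!=: 1.
Proof. by move=> p_pr oG; rewrite -cardG_gt1 oG -[1%N](expn0 p) ltn_exp2l ?prime_gt1. Qed.

Lemma card_Ohm1_dprod (gT : finGroupType) (A B G : {group gT}) :
  A \x B = G -> #|'Ohm_1(G)| = (#|'Ohm_1(A)| * #|'Ohm_1(B)|)%N.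
Proof. by move/(Ohm_dprod 1)/dprod_card. Qed.

Lemma card_Ohm1_elementary_divisors (gT : finGroupType) (A : {group gT}) d :
  num_elementary_divisors A d ->
  exists ps, [/\ all prime ps, size ps = d & #|'Ohm_1(A)| = (\prod_(p <- ps) p)%N].
Proof.
elim: d A => [|d IH] A [C [defA hC]].
  exists [::]; split=> //; rewrite big_nil -defA big_ord0.
  by apply/eqP; rewrite -trivg_card1 -subG1 Ohm_sub.
rewrite big_ord_recr /= in defA; have [[A' C' defA' defC']] := dprodP defA.
have [|ps [ps_pr size_ps oA']] := IH A'.
  by exists (fun i => C (widen_ord (leqnSn d) i)); split=> // i; apply: hC.
have [cycC [p [k [p_pr oC]]]] := hC ord_max.
have pC : p.-group (C ord_max) by rewrite /pgroup oC pnatX pnat_id.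
have ntC := prime_power_group_nontrivial p_pr oC.
exists (rcons ps p); split; first by rewrite all_rcons p_pr.
  by rewrite size_rcons size_ps.
rewrite defA' in defA; rewrite (card_Ohm1_dprod defA) oA'.
by rewrite (Ohm1_cyclic_pgroup_prime cycC pC ntC) -cats1 big_cat big_seq1.
Qed.

Lemma card_Ohm1_quaternion (gT : finGroupType) (Q : {group gT}) :
  Q \isog 'Q_8 -> #|'Ohm_1(Q)| = 2%N.
Proof.
move=> isoQ; have oQ : #|Q| = 8%N by rewrite (card_isog isoQ) (card_quaternion (n := 3)).
have pQ : 2.-group Q by rewrite /pgroup oQ.
have ntQ : Q :!=: 1 by rewrite -cardG_gt1 oQ.
apply/(prime_Ohm1P pQ ntQ); apply/orP; right; apply/andP; split=> //.
by apply/eqP/quaternion_classP; exists 3.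
Qed.

Lemma card_Ohm1_quaternion_dprod (gT : finGroupType) (Q A H : {group gT}) d :
  Q \x A = H -> Q \isog 'Q_8 -> num_elementary_divisors A d ->
  exists ps, [/\ all prime ps, size ps = d.+1 & #|'Ohm_1(H)| = (\prod_(p <- ps) p)%N].
Proof.
move=> defH isoQ /card_Ohm1_elementary_divisors[ps [ps_pr size_ps oA]].
exists (2 :: ps); split; rewrite /= ?size_ps //.
by rewrite (card_Ohm1_dprod defH) card_Ohm1_quaternion // oA big_cons.
Qed.

(** * Coset coordinates *)

(* Conditions 2 and 4 say that x |-> (N j :* x)_j maps G bijectively onto the
   product of the coset spaces; condition 3 that no N j can be omitted. *)
Definition coset_coordinates (gT : finGroupType) (G : {group gT}) k
    (N : 'I_k -> {group gT}) : Prop :=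
  [/\ forall j, N j \subset G,
      forall x, x \in G -> (forall j, x \in N j) -> x = 1,
      forall j0, exists2 x, x \in G & x != 1 /\ forall j, j != j0 -> x \in N j
    & (\prod_(j < k) #|G : N j|)%N = #|G| ].

Lemma coset_coordinates1 (gT : finGroupType) (G : {group gT}) :
  G :!=: 1 -> coset_coordinates G (fun _ : 'I_1 => 1%G).
Proof.
move=> ntG; split=> [j|x _ /(_ ord0)/set1P //|j0|]; rewrite ?sub1G ?big_ord1 ?indexg1 //.
by have [x Gx ntx] := trivgPn _ ntG; exists x => //; split=> // j; rewrite !ord1 eqxx.
Qed.

Section DirectFactor.
Variables (gT : finGroupType) (G' C G : {group gT}).
Hypotheses (defG : G' \x C = G) (ntC : C :!=: 1).

Let sG'G : G' \subset G. Proof. by rewrite -(dprodW defG) mulG_subl. Qed.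
Let sCG : C \subset G. Proof. by rewrite -(dprodW defG) mulG_subr. Qed.

Lemma dprod_joinEl (N : {group gT}) : N \subset G' -> N <*> C = N * C.
Proof.
have [_ _ cG'C _] := dprodP defG.
by move=> sNG'; rewrite cent_joinEr // (subset_trans cG'C) ?centS.
Qed.

Lemma dprod_join_subG (N : {group gT}) : N \subset G' -> N <*> C \subset G.
Proof. by move=> sNG'; rewrite join_subG (subset_trans sNG'). Qed.

Lemma mem_dprod_join (N : {group gT}) n c :
  N \subset G' -> n \in N -> c \in C -> n * c \in N <*> C.
Proof. by move=> sNG' Nn Cc; rewrite dprod_joinEl // mem_mulg. Qed.

Lemma dprod_join_Dedekind (N : {group gT}) x :
  N \subset G' -> x \in G' -> x \in N <*> C -> x \in N.
Proof.
move=> sNG' G'x; rewrite dprod_joinEl // => /mulsgP[n c Nn Cc def_x].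
have [_ _ _ tiG'C] := dprodP defG.
have G'n : n \in G' := subsetP sNG' n Nn.
have G'c : c \in G' by rewrite -(mulKg n c) -def_x groupM ?groupV.
have: c \in G' :&: C by rewrite inE G'c.
by rewrite tiG'C => /set1P c1; rewrite def_x c1 mulg1.
Qed.

Lemma index_dprod_join (N : {group gT}) :
  N \subset G' -> #|G : N <*> C| = #|G' : N|.
Proof.
move=> sNG'; have [_ _ _ tiG'C] := dprodP defG.
have tiNC : N :&: C = 1 by apply/trivgP; rewrite -tiG'C setSI.
rewrite -!divgS ?dprod_join_subG // -(dprod_card defG) /= dprod_joinEl //.
by rewrite TI_cardMg // divnMr.
Qed.

Lemma index_dprod_subl (N : {group gT}) :
  N \subset G' -> #|G : N| = (#|G' : N| * #|C|)%N.
Proof.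
move=> sNG'; rewrite -!divgS ?(subset_trans sNG') //.
by rewrite -(dprod_card defG) divn_mulAC ?cardSg.
Qed.

Lemma coset_coordinates_dprod_merge k (N : 'I_k.+1 -> {group gT}) :
  coset_coordinates G' N ->
  coset_coordinates G (fun j => if j == ord_max then N j else (N j <*> C)%G).
Proof.
case=> sNG' trivN ntN prodN; have [c Cc ntc] := trivgPn _ ntC.
split.
- by move=> j; case: eqP => _; [exact: subset_trans sG'G | exact: dprod_join_subG].
- move=> x Gx Nx; have G'x : x \in G'.
    by have := Nx ord_max; rewrite eqxx => /(subsetP (sNG' _)).
  apply: trivN => // j; have := Nx j; case: eqP => [-> //|_].
  exact: dprod_join_Dedekind.
- move=> j0; have [->|j0_max] := eqVneq j0 ord_max.
    exists c; first exact: (subsetP sCG).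
    by split=> // j /negPf->; rewrite -[c]mul1g mem_dprod_join.
  have [x G'x [ntx Nx]] := ntN j0; exists x; first exact: (subsetP sG'G).
  split=> // j j0j; case: eqP => _; first exact: Nx.
  by rewrite -[x]mulg1 mem_dprod_join ?Nx.
- rewrite (bigD1 ord_max) //= eqxx index_dprod_subl // -(dprod_card defG) -prodN.
  rewrite [in RHS](bigD1 ord_max) //= [RHS]mulnAC; congr (_ * _)%N.
  by apply: eq_bigr => j /negPf->; rewrite index_dprod_join.
Qed.

Lemma coset_coordinates_dprod_add k (N : 'I_k -> {group gT}) :
  coset_coordinates G' N ->
  coset_coordinates G
    (fun j : 'I_k.+1 => if unlift ord_max j is Some i then (N i <*> C)%G else G').
Proof.
case=> sNG' trivN ntN prodN; have [c Cc ntc] := trivgPn _ ntC.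
split.
- by move=> j; case: unliftP => [i _|_]; [exact: dprod_join_subG | exact: sG'G].
- move=> x Gx Nx; have G'x : x \in G' by have := Nx ord_max; rewrite unlift_none.
  apply: trivN => // i; have := Nx (lift ord_max i); rewrite liftK.
  exact: dprod_join_Dedekind.
- move=> j0; case: (unliftP ord_max j0) => [i0 ->|->].
    have [x G'x [ntx Nx]] := ntN i0; exists x; first exact: (subsetP sG'G).
    split=> // j; case: unliftP => [i -> i_i0|//].
    by rewrite -[x]mulg1 mem_dprod_join ?Nx //; apply: contraNneq i_i0 => ->.
  exists c; first exact: (subsetP sCG).
  split=> // j; case: unliftP => [i -> _|->]; last by rewrite eqxx.
  by rewrite -[c]mul1g mem_dprod_join.
- rewrite big_ord_recr /= unlift_none -(index_sdprod (dprodWsd defG)).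
  rewrite -(dprod_card defG) -prodN; congr (_ * _)%N.
  apply: eq_bigr => i _; have -> : widen_ord (leqnSn k) i = lift ord_max i.
    by apply: val_inj; rewrite /= /bump leqNgt ltn_ord.
  by rewrite liftK index_dprod_join.
Qed.

End DirectFactor.

Lemma coset_coordinates_bigdprod (gT : finGroupType) (Q A H : {group gT}) d
    (C : 'I_d -> {group gT}) k :
  Q :!=: 1 -> (forall i, C i :!=: 1) ->
  \big[dprod/1]_(i < d) C i = A -> Q \x A = H -> 0 < k <= d.+1 ->
  exists N : 'I_k -> {group gT}, coset_coordinates H N.
Proof.
move=> ntQ; elim: d C A H k => [|d IH] C A H k ntC defA defH /andP[k_gt0 le_k_d1].
  have -> : k = 1%N by apply/eqP; rewrite eqn_leq le_k_d1.
  have -> : H = Q by apply: val_inj; rewrite /= -defH -defA big_ord0 dprodg1.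
  by exists (fun _ => 1%G); apply: coset_coordinates1.
rewrite big_ord_recr /= in defA; have [[A' C' defA' _]] := dprodP defA.
rewrite defA' in defA; rewrite -defA dprodA in defH.
have [[H' C'' defH' _]] := dprodP defH; rewrite defH' in defH.
have IHd := IH _ A' H' _ (fun i => ntC _) defA' defH'.
case: k k_gt0 le_k_d1 => [|[|k]] // _ le_k_d.
  have [N N_H'] := IHd 1%N isT.
  by eexists; apply: (coset_coordinates_dprod_merge defH (ntC _) N_H').
have [N N_H'] := IHd k.+1 le_k_d.
by eexists; apply: (coset_coordinates_dprod_add defH (ntC _) N_H').
Qed.

Lemma coset_coordinates_proper (gT : finGroupType) (G : {group gT}) k
    (N : 'I_k -> {group gT}) j :
  coset_coordinates G N -> N j \proper G.
Proof.
case=> sNG trivN ntN _; have [x Gx [ntx Nx]] := ntN j.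
apply/properP; split=> //; exists x => //; apply: contra ntx => Njx.
by apply/eqP/trivN => // i; have [->|/Nx] := eqVneq i j.
Qed.

(** * The coset graph *)

Lemma leq_size_card (T : finType) (s : seq T) (A : {set T}) :
  uniq s -> {subset s <= A} -> size s <= #|A|.
Proof.
by move=> s_uniq sA; rewrite -(card_uniqP s_uniq); apply/subset_leq_card/subsetP.
Qed.

Lemma leq_card_size (T : finType) (A : {set T}) (s : seq T) :
  {subset A <= s} -> #|A| <= size s.
Proof. by move=> sA; apply: leq_trans (card_size s); apply/subset_leq_card/subsetP. Qed.

Definition degree (V : finType) (e : rel V) (v : V) : nat := #|[set w | e v w]|.

Lemma degree_aut (V : finType) (e : rel V) (s : {perm V}) v :
  s \in aut_set e -> degree e (s v) = degree e v.
Proof.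
rewrite inE => /forallP s_aut; rewrite /degree -(card_preimset _ (@perm_inj _ s)).
by apply: eq_card => w; rewrite !inE (eqP (forallP (s_aut v) w)).
Qed.

Section NormalRcosets.
Variables (gT : finGroupType) (H N : {group gT}).
Hypothesis nsNH : N <| H.

Let normN u : u \in H -> u \in 'N(N).
Proof. exact/subsetP/normal_norm. Qed.

Lemma rcoset_mulN u v : u \in H -> (N :* u) * (N :* v) = N :* (u * v).
Proof. by move/normN/rcoset_mul. Qed.

Lemma rcoset_divN u v : u \in H -> v \in H -> (N :* u) * (N :* v)^-1 = N :* (u * v^-1).
Proof.
by move=> Hu Hv; rewrite invg_rcoset -norm_rlcoset ?rcoset_mulN ?normN ?groupV.
Qed.

Lemma rcoset_fixN u h : u \in H -> h \in H -> (N :* u :* h == N :* u) = (h \in N).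
Proof.
move=> Hu Hh; rewrite -rcosetM (sameP eqP rcoset_eqP) mem_rcoset.
by rewrite -[u * h * u^-1]mulgA -[u in u * _]invgK -conjgE memJ_norm ?normN ?groupV.
Qed.

End NormalRcosets.

Section CosetGraph.
Variables (gT : finGroupType) (H : {group gT}) (k : nat) (N : 'I_k -> {group gT}).
Hypothesis nsNH : forall j, N j <| H.

Definition coset_vertex := {p : 'I_k * {set gT} | p.2 \in rcosets (N p.1) H}.
Definition vblock (x : coset_vertex) : 'I_k := (val x).1.
Definition vcoset (x : coset_vertex) : {set gT} := (val x).2.

Lemma coset_vertexP (x : coset_vertex) :
  exists2 u, u \in H & vcoset x = N (vblock x) :* u.
Proof. exact/rcosetsP/(valP x). Qed.

Lemma coset_vertex_inj (x y : coset_vertex) :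
  vblock x = vblock y -> vcoset x = vcoset y -> x = y.
Proof.
rewrite /vblock /vcoset => eb ec; apply: val_inj.
by rewrite [val x]surjective_pairing [val y]surjective_pairing eb ec.
Qed.

Definition arc_colour (x y : coset_vertex) : 'I_k * {set gT} :=
  (vblock x, vcoset x * (vcoset y)^-1).

Definition arc_code (a : coset_vertex * coset_vertex) : nat :=
  enum_rank (arc_colour a.1 a.2).

Definition gadget_bound : nat := #|{: 'I_k * {set gT}}|.+3.

Definition gadget_vertex :=
  {q : (coset_vertex * coset_vertex) * 'I_gadget_bound |
     (vblock q.1.1 == vblock q.1.2) && (q.2 < (arc_code q.1).+3)}.
Definition garc (g : gadget_vertex) : coset_vertex * coset_vertex := (val g).1.
Definition gidx (g : gadget_vertex) : nat := (val g).2.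

Lemma vblock_garc g : vblock (garc g).1 = vblock (garc g).2.
Proof. by case/andP: (valP g) => /eqP. Qed.

Lemma gidx_lt g : gidx g < (arc_code (garc g)).+3.
Proof. by case/andP: (valP g). Qed.

Lemma gadget_vertex_inj g g' : garc g = garc g' -> gidx g = gidx g' -> g = g'.
Proof.
rewrite /garc /gidx => ea /ord_inj ei; apply: val_inj.
by rewrite [val g]surjective_pairing [val g']surjective_pairing ea ei.
Qed.

Lemma gadget_exists a i : vblock a.1 = vblock a.2 -> i < (arc_code a).+3 ->
  exists2 g, garc g = a & gidx g = i.
Proof.
move=> ba lt_i_a; have lt_i : i < gadget_bound.
  by apply: leq_trans lt_i_a _; rewrite /gadget_bound !ltnS ltnW ?ltn_ord.
have Pi : (vblock (a, Ordinal lt_i).1.1 == vblock (a, Ordinal lt_i).1.2)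
    && ((a, Ordinal lt_i).2 < (arc_code (a, Ordinal lt_i).1).+3).
  by rewrite /= ba eqxx.
by exists (Sub (a, Ordinal lt_i) Pi).
Qed.

Definition vertex := (coset_vertex + gadget_vertex)%type.

Definition gadget_at (a : coset_vertex * coset_vertex) (i : nat) : vertex :=
  if insub (a, inord i) is Some g then inr g else inl a.1.

Lemma gadget_atE a i g : garc g = a -> gidx g = i -> gadget_at a i = inr g.
Proof.
move=> <- <-; rewrite /gadget_at (_ : (garc g, inord (gidx g)) = val g) ?valK //.
by rewrite /garc /gidx inord_val -surjective_pairing.
Qed.

(* The gadget of an arc (x, y) has arc_code (x, y) + 3 vertices: 1 and 2 hang
   from 0, each i > 2 from i - 1, and 0 (resp. 1) is attached to x (resp. y). *)
Definition gadget_parent (i : nat) : nat := if i == 2 then 0%N else i.-1.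

Definition gadget_adj (i j : nat) : bool :=
  (0 < j) && (i == gadget_parent j) || (0 < i) && (j == gadget_parent i).

Definition attached (x : coset_vertex) (g : gadget_vertex) : bool :=
  (gidx g == 0%N) && ((garc g).1 == x) || (gidx g == 1%N) && ((garc g).2 == x).

Definition coset_graph (u v : vertex) : bool :=
  match u, v with
  | inl _, inl _ => false
  | inl x, inr g | inr g, inl x => attached x g
  | inr g, inr g' => (garc g == garc g') && gadget_adj (gidx g) (gidx g')
  end.

Lemma gadget_parent_lt i : 0 < i -> gadget_parent i < i.
Proof. by rewrite /gadget_parent; case: i => [|[|[|i]]]. Qed.

Lemma gadget_adj0 j : gadget_adj 0 j = (j == 1%N) || (j == 2).
Proof. by case: j => [|[|[|j]]]. Qed.

Lemma gadget_adj1 j : gadget_adj 1 j = (j == 0%N).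
Proof. by case: j => [|[|[|j]]]. Qed.

Lemma gadget_adj_ge2 i j : 2 <= i -> gadget_adj i j = (j == i.+1) || (j == gadget_parent i).
Proof.
case: i => [|[|[|i]]] // _; case: j => [|[|[|j]]] //.
  by rewrite /gadget_adj /gadget_parent /= !eqSS; case: j.
by rewrite /gadget_adj /gadget_parent /= !eqSS [i.+1 == _]eq_sym.
Qed.

Lemma gadget_adj_parent i j : 2 <= i -> gadget_adj (gadget_parent i) j -> j <= i.
Proof.
case: i => [|[|[|i]]] //= _; first by rewrite gadget_adj0 => /orP[]/eqP->.
have -> : gadget_parent i.+3 = i.+2 by [].
by rewrite gadget_adj_ge2 // => /orP[]/eqP-> //; rewrite leqW // ltnW // gadget_parent_lt.
Qed.

Lemma coset_graph_simple : simple_graph coset_graph.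
Proof.
split=> [[x|g] [y|g']|[x|g]] //=; first by rewrite eq_sym /gadget_adj orbC.
rewrite eqxx /gadget_adj orbb; case: (posnP (gidx g)) => [->|i_gt0] //=.
by rewrite gtn_eqF ?gadget_parent_lt.
Qed.

(* Elements outside H act as the identity, which makes the action total. *)
Definition in_H (h : gT) : gT := if h \in H then h else 1.

Lemma in_H_mem h : in_H h \in H.
Proof. by rewrite /in_H; case: ifP. Qed.

Lemma in_H_id h : h \in H -> in_H h = h.
Proof. by rewrite /in_H => ->. Qed.

Lemma coset_act_subproof h (x : coset_vertex) :
  let p := (vblock x, vcoset x :* in_H h) in p.2 \in rcosets (N p.1) H.
Proof.
have [u Hu ->] := coset_vertexP x; apply/rcosetsP; exists (u * in_H h).
  by rewrite groupM ?in_H_mem.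
by rewrite rcosetM.
Qed.

Definition coset_act h (x : coset_vertex) : coset_vertex :=
  Sub (vblock x, vcoset x :* in_H h) (coset_act_subproof h x).

Lemma vblock_act h x : vblock (coset_act h x) = vblock x. Proof. by []. Qed.
Lemma vcoset_act h x : vcoset (coset_act h x) = vcoset x :* in_H h. Proof. by []. Qed.

Lemma coset_act_inj h : injective (coset_act h).
Proof.
move=> x y exy; apply: coset_vertex_inj; first by rewrite -(vblock_act h x) exy.
by rewrite -(rcosetK (in_H h) (vcoset x)) -vcoset_act exy vcoset_act rcosetK.
Qed.

Lemma arc_colour_act h (x y : coset_vertex) : vblock x = vblock y ->
  arc_colour (coset_act h x) (coset_act h y) = arc_colour x y.
Proof.
move=> bxy; rewrite /arc_colour !vcoset_act; congr pair.
have [u Hu ->] := coset_vertexP x; have [v Hv ->] := coset_vertexP y; rewrite -bxy.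
rewrite -!rcosetM !(rcoset_divN (nsNH _)) ?groupM ?in_H_mem //.
by rewrite invMg mulgA mulgK.
Qed.

Lemma gadget_act_subproof h (g : gadget_vertex) :
  let q := ((coset_act h (garc g).1, coset_act h (garc g).2), (val g).2) in
  (vblock q.1.1 == vblock q.1.2) && (q.2 < (arc_code q.1).+3).
Proof.
rewrite /= /arc_code /= arc_colour_act ?vblock_garc //.
by apply/andP; split; [exact/eqP/vblock_garc | exact: gidx_lt].
Qed.

Definition gadget_act h (g : gadget_vertex) : gadget_vertex :=
  Sub ((coset_act h (garc g).1, coset_act h (garc g).2), (val g).2)
      (gadget_act_subproof h g).

Lemma garc_act h g :
  garc (gadget_act h g) = (coset_act h (garc g).1, coset_act h (garc g).2).
Proof. by []. Qed.

Lemma gidx_act h g : gidx (gadget_act h g) = gidx g.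
Proof. by []. Qed.

Lemma gadget_act_inj h : injective (gadget_act h).
Proof.
move=> g g' egg'; apply: gadget_vertex_inj; last by rewrite -(gidx_act h g) egg'.
have e1 := congr1 (fun g => (garc g).1) egg'; have e2 := congr1 (fun g => (garc g).2) egg'.
rewrite [garc g]surjective_pairing [garc g']surjective_pairing.
by rewrite (coset_act_inj e1) (coset_act_inj e2).
Qed.

Definition vertex_act h (v : vertex) : vertex :=
  match v with inl x => inl (coset_act h x) | inr g => inr (gadget_act h g) end.

Lemma vertex_act_inj h : injective (vertex_act h).
Proof.
move=> [x|g] [y|g'] //= e.
  by rewrite (coset_act_inj (inl_inj e)).
by rewrite (gadget_act_inj (inr_inj e)).
Qed.

Definition graph_perm h : {perm vertex} := perm (@vertex_act_inj h).

Lemma graph_permE h v : graph_perm h v = vertex_act h v.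
Proof. exact: permE. Qed.

Lemma coset_actM h1 h2 x : h1 \in H -> h2 \in H ->
  coset_act (h1 * h2) x = coset_act h2 (coset_act h1 x).
Proof.
move=> Hh1 Hh2; apply: coset_vertex_inj => //.
by rewrite !vcoset_act !in_H_id ?groupM // rcosetM.
Qed.

Lemma graph_permM : {in H &, {morph graph_perm : h1 h2 / h1 * h2}}.
Proof.
move=> h1 h2 Hh1 Hh2; apply/permP => -[x|g]; rewrite permM !graph_permE /=.
  by rewrite coset_actM.
by congr inr; apply: gadget_vertex_inj; rewrite // !garc_act /= !coset_actM.
Qed.

Canonical graph_perm_morphism := Morphism graph_permM.

Lemma attached_act h x g : attached (coset_act h x) (gadget_act h g) = attached x g.
Proof. by rewrite /attached gidx_act garc_act /= !(inj_eq (@coset_act_inj h)). Qed.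

Lemma graph_perm_aut h : graph_perm h \in aut_set coset_graph.
Proof.
rewrite inE; apply/forallP => u; apply/forallP => v; rewrite !graph_permE.
case: u v => [x|g] [y|g'] //=; rewrite ?attached_act // !gidx_act !garc_act.
by rewrite !xpair_eqE !(inj_eq (@coset_act_inj h)) -xpair_eqE -!surjective_pairing.
Qed.

Lemma attached_gidx x g : attached x g -> gidx g <= 1.
Proof. by case/orP=> /andP[/eqP-> _]. Qed.

Lemma inr_gadget_neq g g' :
  (garc g != garc g') || (gidx g != gidx g') -> inr g != inr g' :> vertex.
Proof. by move=> ne; apply/eqP => e; move: ne; rewrite (inr_inj e) !eqxx. Qed.

Local Notation deg := (degree coset_graph).

Lemma degree_gadget0_le g : gidx g = 0%N -> deg (inr g) <= 3.
Proof.
move=> g0; apply: (@leq_card_size _ _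
  [:: inl (garc g).1; gadget_at (garc g) 1; gadget_at (garc g) 2]) => -[x|g'].
  by rewrite !inE /= /attached g0 /= orbF => /eqP->; rewrite eqxx.
rewrite !inE /= g0 gadget_adj0 => /andP[/eqP ea /orP[]/eqP ei].
  by rewrite (gadget_atE (esym ea) ei) eqxx.
by rewrite (gadget_atE (esym ea) ei) eqxx orbT.
Qed.

Lemma degree_gadget_le2 g : 0 < gidx g -> deg (inr g) <= 2.
Proof.
move=> i_gt0; apply: (@leq_card_size _ _
  [:: if gidx g == 1%N then inl (garc g).2 else gadget_at (garc g) (gidx g).+1;
      gadget_at (garc g) (gadget_parent (gidx g))]) => -[x|g'].
  rewrite !inE /= /attached eqn0Ngt i_gt0 /= => /andP[/eqP-> /eqP<-].
  by rewrite !eqxx.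
rewrite !inE /= => /andP[/eqP ea]; move: i_gt0; rewrite leq_eqVlt => /orP[/eqP i1|i_ge2].
  by rewrite -i1 gadget_adj1 => /eqP ei; rewrite (gadget_atE (esym ea) ei) !eqxx orbT.
rewrite gadget_adj_ge2 // => /orP[]/eqP ei.
by rewrite (gadget_atE (esym ea) ei) gtn_eqF //= eqxx.
by rewrite (gadget_atE (esym ea) ei) eqxx orbT.
Qed.

Lemma degree_gadget_le g : deg (inr g) <= 3.
Proof.
have [g0|i_gt0] := posnP (gidx g); first exact: degree_gadget0_le.
exact: leq_trans (degree_gadget_le2 i_gt0) _.
Qed.

Lemma degree_gadget_last g :
  2 <= gidx g -> gidx g = (arc_code (garc g)).+2 -> deg (inr g) <= 1.
Proof.
move=> i_ge2 i_last; apply: (@leq_card_size _ _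
  [:: gadget_at (garc g) (gadget_parent (gidx g))]) => -[x|g'].
  by rewrite !inE /= => /attached_gidx; rewrite leqNgt i_ge2.
rewrite !inE /= gadget_adj_ge2 // => /andP[/eqP ea /orP[]/eqP ei].
  by have := gidx_lt g'; rewrite ei i_last -ea ltnn.
by rewrite (gadget_atE (esym ea) ei) eqxx.
Qed.

Lemma degree_gadget0_ge g : gidx g = 0%N -> 3 <= deg (inr g).
Proof.
move=> g0; have ba := vblock_garc g.
have [g1 a1 i1] := gadget_exists ba (isT : 1 < (arc_code (garc g)).+3).
have [g2 a2 i2] := gadget_exists ba (isT : 2 < (arc_code (garc g)).+3).
apply: (@leq_size_card _ [:: inl (garc g).1; inr g1; inr g2]).
  by rewrite !cons_uniq !inE inr_gadget_neq // i1 i2 orbT.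
move=> w; rewrite !inE => /or3P[]/eqP->.
- by rewrite /coset_graph /attached g0 !eqxx.
- by rewrite /coset_graph a1 eqxx g0 i1.
- by rewrite /coset_graph a2 eqxx g0 i2.
Qed.

Lemma degree_gadget_mid g :
  2 <= gidx g -> (gidx g).+1 < (arc_code (garc g)).+3 -> 2 <= deg (inr g).
Proof.
move=> i_ge2 lt_i1; have ba := vblock_garc g.
have [g1 a1 i1] := gadget_exists ba lt_i1.
have lt_pi : gadget_parent (gidx g) < gidx g by rewrite gadget_parent_lt // ltnW.
have [g2 a2 i2] := gadget_exists ba (ltn_trans lt_pi (gidx_lt g)).
apply: (@leq_size_card _ [:: inr g1; inr g2]).
  have lt_pi1 : gadget_parent (gidx g) < (gidx g).+1 by rewrite ltnW.
  by rewrite !cons_uniq !inE inr_gadget_neq // i1 i2 (gtn_eqF lt_pi1) orbT.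
move=> w; rewrite !inE => /orP[]/eqP->.
  by rewrite /coset_graph a1 eqxx gadget_adj_ge2 // i1 eqxx.
by rewrite /coset_graph a2 eqxx gadget_adj_ge2 // i2 eqxx orbT.
Qed.

Hypothesis coords : coset_coordinates H N.

Lemma coset_vertex_other x : exists2 y, vblock y = vblock x & y != x.
Proof.
have /properP[_ [h Hh notNh]] := coset_coordinates_proper (vblock x) coords.
exists (coset_act h x) => //; apply: contra notNh => /eqP/(congr1 vcoset).
rewrite vcoset_act in_H_id //; have [u Hu ->] := coset_vertexP x; move/eqP.
by rewrite (rcoset_fixN (nsNH _)).
Qed.

Lemma degree_coset_ge x : 4 <= deg (inl x).
Proof.
have [y byx yx] := coset_vertex_other x.
have bxx : vblock (x, x).1 = vblock (x, x).2 by [].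
have [g1 a1 i1] := gadget_exists bxx (isT : 0 < (arc_code (x, x)).+3).
have [g2 a2 i2] := gadget_exists bxx (isT : 1 < (arc_code (x, x)).+3).
have [g3 a3 i3] := gadget_exists (esym byx : vblock (x, y).1 = _)
  (isT : 0 < (arc_code (x, y)).+3).
have [g4 a4 i4] := gadget_exists (byx : vblock (y, x).1 = _)
  (isT : 1 < (arc_code (y, x)).+3).
apply: (@leq_size_card _ [:: inr g1; inr g2; inr g3; inr g4]).
  rewrite !cons_uniq !inE !negb_or !inr_gadget_neq ?a1 ?a2 ?a3 ?a4 ?i1 ?i2 ?i3 ?i4 ?orbT //.
  1,2: by rewrite xpair_eqE !eqxx ?andbT ?andTb eq_sym (negPf yx).
move=> w; rewrite !inE => /or4P[]/eqP->; rewrite /coset_graph /attached.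
- by rewrite a1 i1 !eqxx.
- by rewrite a2 i2 !eqxx orbT.
- by rewrite a3 i3 !eqxx.
- by rewrite a4 i4 !eqxx orbT.
Qed.

Lemma attached0 x g : gidx g = 0%N -> attached x g = ((garc g).1 == x).
Proof. by rewrite /attached => ->; case: (_ == x). Qed.

Lemma attached1 x g : gidx g = 1%N -> attached x g = ((garc g).2 == x).
Proof. by rewrite /attached => ->. Qed.

Lemma base_vertex_subproof j :
  let p := (j, N j : {set gT}) in p.2 \in rcosets (N p.1) H.
Proof. by apply/rcosetsP; exists 1; rewrite ?rcoset1. Qed.

Definition base_vertex j : coset_vertex := Sub (j, N j : {set gT}) (base_vertex_subproof j).

Section Automorphism.
Variable s : {perm vertex}.
Hypothesis s_aut : s \in aut_set coset_graph.

Lemma coset_graph_aut u v : coset_graph (s u) (s v) = coset_graph u v.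
Proof. by move: s_aut; rewrite inE => /forallP/(_ u)/forallP/(_ v)/eqP. Qed.

Definition aut_coset (x : coset_vertex) : coset_vertex :=
  if s (inl x) is inl y then y else x.

Definition aut_gadget (g : gadget_vertex) : gadget_vertex :=
  if s (inr g) is inr g' then g' else g.

Lemma aut_inl x : s (inl x) = inl (aut_coset x).
Proof.
rewrite /aut_coset; case E: (s (inl x)) => [//|g].
have := degree_gadget_le g; rewrite -E (degree_aut _ s_aut).
by move/(leq_trans (degree_coset_ge x)).
Qed.

Lemma aut_inr g : s (inr g) = inr (aut_gadget g).
Proof.
rewrite /aut_gadget; case E: (s (inr g)) => [y|//].
have := degree_gadget_le g; rewrite -(degree_aut _ s_aut) E.
by move/(leq_trans (degree_coset_ge y)).
Qed.

Lemma aut_gadget_inj : injective aut_gadget.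
Proof. by move=> g g' e; apply/inr_inj/(@perm_inj _ s); rewrite !aut_inr e. Qed.

Lemma aut_attached x g : attached x g -> attached (aut_coset x) (aut_gadget g).
Proof.
by rewrite -[attached x g]/(coset_graph (inl x) (inr g)) -coset_graph_aut aut_inl aut_inr.
Qed.

Lemma aut_gadget_adj g g' : coset_graph (inr g) (inr g') ->
  garc (aut_gadget g) = garc (aut_gadget g') /\
  gadget_adj (gidx (aut_gadget g)) (gidx (aut_gadget g')).
Proof. by rewrite -coset_graph_aut !aut_inr /coset_graph => /andP[/eqP]. Qed.

Lemma aut_gadget_head g : gidx g <= 1 ->
  garc (aut_gadget g) = (aut_coset (garc g).1, aut_coset (garc g).2) /\
  gidx (aut_gadget g) = gidx g.
Proof.
move=> le_i1; set a := garc g; have ba := vblock_garc g.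
have [g0 a0 i0] := gadget_exists ba (isT : 0 < (arc_code a).+3).
have [g1 a1 i1] := gadget_exists ba (isT : 1 < (arc_code a).+3).
have j0 : gidx (aut_gadget g0) = 0%N.
  apply/eqP; rewrite -leqn0 leqNgt; apply/negP => /degree_gadget_le2.
  by rewrite -aut_inr (degree_aut _ s_aut) leqNgt degree_gadget0_ge.
have att0 : attached (aut_coset a.1) (aut_gadget g0).
  by apply: aut_attached; rewrite attached0 // a0.
have att1 : attached (aut_coset a.2) (aut_gadget g1).
  by apply: aut_attached; rewrite attached1 // a1.
have [e01 adj01] : garc (aut_gadget g0) = garc (aut_gadget g1) /\
    gadget_adj (gidx (aut_gadget g0)) (gidx (aut_gadget g1)).
  by apply: aut_gadget_adj; rewrite /coset_graph a0 a1 i0 i1 eqxx.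
have j1 : gidx (aut_gadget g1) = 1%N.
  move: adj01 (attached_gidx att1); rewrite j0 gadget_adj0.
  by case: (gidx _) => [|[|[|]]].
have arc0 : garc (aut_gadget g0) = (aut_coset a.1, aut_coset a.2).
  move: att0 att1; rewrite attached0 // attached1 // -e01 => /eqP<- /eqP<-.
  exact: surjective_pairing.
move: le_i1; rewrite leq_eqVlt ltnS leqn0 => /orP[]/eqP gi.
  have -> : g = g1 by apply: gadget_vertex_inj; rewrite ?a1 ?i1.
  by rewrite -e01 arc0 j1 i1.
have -> : g = g0 by apply: gadget_vertex_inj; rewrite ?a0 ?i0.
by rewrite arc0 j0 i0.
Qed.

Lemma aut_gadget_garc_gidx g :
  garc (aut_gadget g) = (aut_coset (garc g).1, aut_coset (garc g).2) /\
  gidx (aut_gadget g) = gidx g.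
Proof.
have [n] := ubnP (gidx g); elim: n g => // n IH g lt_gn.
have [le_i1|i_ge2] := leqP (gidx g) 1; first exact: aut_gadget_head.
have ba := vblock_garc g.
have lt_pi : gadget_parent (gidx g) < gidx g by rewrite gadget_parent_lt // ltnW.
have [p ap ip] := gadget_exists ba (ltn_trans lt_pi (gidx_lt g)).
have [|arc_p idx_p] := IH p; first by rewrite ip (leq_trans lt_pi lt_gn).
have pg : coset_graph (inr p) (inr g).
  by rewrite /coset_graph ap eqxx ip /gadget_adj eqxx (ltnW i_ge2).
have [e_pg adj] := aut_gadget_adj pg.
have arc_g : garc (aut_gadget g) = (aut_coset (garc g).1, aut_coset (garc g).2).
  by rewrite -e_pg arc_p ap.
split=> //; move: adj; rewrite idx_p ip => /(gadget_adj_parent i_ge2).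
rewrite leq_eqVlt => /orP[/eqP //|lt_ji].
have [q aq iq] := gadget_exists ba (ltn_trans lt_ji (gidx_lt g)).
have [|arc_q idx_q] := IH q; first by rewrite iq (leq_trans lt_ji lt_gn).
have : aut_gadget q = aut_gadget g.
  by apply: gadget_vertex_inj; rewrite ?arc_q ?arc_g ?aq // idx_q iq.
by move/aut_gadget_inj=> eqg; move: lt_ji; rewrite -iq eqg ltnn.
Qed.

(* The last vertex of a gadget has degree 1; in a longer gadget its image
   would be an inner vertex, of degree 2. *)
Lemma arc_code_aut g : arc_code (garc (aut_gadget g)) = arc_code (garc g).
Proof.
have ba := vblock_garc g.
have [l al il] := gadget_exists ba (ltnSn (arc_code (garc g)).+2).
have [arc_l idx_l] := aut_gadget_garc_gidx l.
have [arc_g _] := aut_gadget_garc_gidx g.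
have -> : garc (aut_gadget g) = garc (aut_gadget l) by rewrite arc_g arc_l al.
apply/eqP; rewrite eqn_leq; apply/andP; split; last first.
  by have := gidx_lt (aut_gadget l); rewrite idx_l il.
rewrite leqNgt; apply/negP => lt_code.
have := degree_gadget_last (_ : 2 <= gidx l) (_ : gidx l = (arc_code (garc l)).+2).
rewrite il al -(degree_aut _ s_aut) aut_inr => /(_ isT erefl).
by apply/negP; rewrite -ltnNge degree_gadget_mid // idx_l il.
Qed.

Lemma arc_colour_aut x y : vblock x = vblock y ->
  arc_colour (aut_coset x) (aut_coset y) = arc_colour x y.
Proof.
move=> bxy; have [g ag ig] := gadget_exists (bxy : vblock (x, y).1 = _)
  (isT : 0 < (arc_code (x, y)).+3).
have := arc_code_aut g; have [-> _] := aut_gadget_garc_gidx g.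
by rewrite ag => /ord_inj/enum_rank_inj.
Qed.

Lemma vblock_aut x : vblock (aut_coset x) = vblock x.
Proof. by have [] := arc_colour_aut (erefl (vblock x)). Qed.

Lemma vcoset_aut x :
  vcoset (aut_coset x) = vcoset x * vcoset (aut_coset (base_vertex (vblock x))).
Proof.
set b := base_vertex _; have [_ e] := arc_colour_aut (erefl (vblock x) : _ = vblock b).
have [v Hv ex] := coset_vertexP x; have [u Hu eu] := coset_vertexP (aut_coset b).
have [w Hw ew] := coset_vertexP (aut_coset x); rewrite !vblock_aut in eu ew.
move: e; rewrite ex eu ew -[vcoset b](rcoset1 (N (vblock x))).
rewrite !(rcoset_divN (nsNH _)) // invg1 mulg1 => e.
by rewrite (rcoset_mulN (nsNH _)) // -[w](mulgKV u) rcosetM e -rcosetM.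
Qed.

End Automorphism.

Lemma aut_eq_base (s t : {perm vertex}) :
  s \in aut_set coset_graph -> t \in aut_set coset_graph ->
  (forall j, vcoset (aut_coset s (base_vertex j)) = vcoset (aut_coset t (base_vertex j))) ->
  s = t.
Proof.
move=> s_aut t_aut st_base.
have st x : aut_coset s x = aut_coset t x.
  apply: coset_vertex_inj; first by rewrite (vblock_aut s_aut) (vblock_aut t_aut).
  by rewrite (vcoset_aut s_aut) (vcoset_aut t_aut) st_base.
apply/permP => -[x|g]; first by rewrite (aut_inl s_aut) (aut_inl t_aut) st.
have [arc_s idx_s] := aut_gadget_garc_gidx s_aut g.
have [arc_t idx_t] := aut_gadget_garc_gidx t_aut g.
rewrite (aut_inr s_aut) (aut_inr t_aut); congr inr.
by apply: gadget_vertex_inj; rewrite ?arc_s ?arc_t ?st ?idx_s ?idx_t.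
Qed.

Lemma card_aut_coset_graph : #|aut_set coset_graph| <= #|H|.
Proof.
have [_ _ _ prodN] := coords.
pose base_cosets s := [ffun j => vcoset (aut_coset s (base_vertex j))].
rewrite -(card_in_imset (f := base_cosets)); last first.
  move=> s t s_aut t_aut /ffunP st; apply: (aut_eq_base s_aut t_aut) => j.
  by have := st j; rewrite !ffunE.
apply: leq_trans (_ : #|family (fun j => rcosets (N j) H)| <= _).
  apply/subset_leq_card/subsetP => _ /imsetP[s s_aut ->]; apply/familyP => j.
  rewrite ffunE; have := valP (aut_coset s (base_vertex j)).
  by rewrite -/(vblock _) (vblock_aut s_aut).
by rewrite card_family foldrE big_image -prodN; apply/eq_leq/eq_bigr.
Qed.

Lemma graph_perm_injm : 'injm graph_perm_morphism.
Proof.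
have [_ trivN _ _] := coords.
apply/injmP => h1 h2 Hh1 Hh2 /(congr1 (fun p : {perm vertex} => p (inl (base_vertex _)))) e.
suff /eqP : h1 * h2^-1 = 1 by rewrite mulg_eq1 invgK => /eqP.
apply: trivN => [|j]; first by rewrite groupM ?groupV.
have := congr1 (fun v => if v is inl z then vcoset z else set0) (e j).
rewrite /= !graph_permE /= !vcoset_act !in_H_id // => /rcoset_eqP.
by rewrite mem_rcoset.
Qed.

Lemma graph_perm_im : graph_perm_morphism @* H = aut_group coset_graph.
Proof.
apply/eqP; rewrite eqEcard card_injm ?graph_perm_injm ?card_aut_coset_graph // andbT.
by apply/subsetP => _ /morphimP[h _ Hh ->]; apply: graph_perm_aut.
Qed.

Lemma aut_coset_graph_isog : aut_group coset_graph \isog H.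
Proof.
rewrite isog_sym; apply/isogP; exists graph_perm_morphism.
  exact: graph_perm_injm.
exact: graph_perm_im.
Qed.

Lemma coset_act_fix h x : h \in N (vblock x) -> coset_act h x = x.
Proof.
move=> Nh; have Hh := subsetP (normal_sub (nsNH _)) h Nh.
apply: coset_vertex_inj => //; rewrite vcoset_act in_H_id //.
by have [u Hu ->] := coset_vertexP x; apply/eqP; rewrite (rcoset_fixN (nsNH _)).
Qed.

Definition vertex_block (v : vertex) : 'I_k :=
  match v with inl x => vblock x | inr g => vblock (garc g).1 end.

Lemma stab_base_vertices : stab coset_graph [set inl (base_vertex j) | j : 'I_k] = 1.
Proof.
apply/trivgP/subsetP => s /stabP[s_aut s_base]; rewrite inE.
have one_aut : (1 : {perm vertex}) \in aut_set coset_graph := group1 (aut_group _).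
have aut_coset_fix t x : t \in aut_set coset_graph -> t (inl x) = inl x -> aut_coset t x = x.
  by move=> t_aut; rewrite (aut_inl t_aut) => e; apply: inl_inj e.
apply/eqP/(aut_eq_base s_aut one_aut) => j.
rewrite (aut_coset_fix _ _ one_aut) ?perm1 // (aut_coset_fix _ _ s_aut) //.
by apply: s_base; apply: imset_f.
Qed.

Lemma card_ge_stab_trivial (S : {set vertex}) :
  stab coset_graph S = 1 -> k <= #|S|.
Proof.
have [_ _ ntN _] := coords; move=> stS1; rewrite leqNgt; apply/negP => ltSk.
have /subsetPn[j0 _ S_j0] : ~~ ([set: 'I_k] \subset vertex_block @: S).
  apply: contraTN ltSk => /subset_leq_card; rewrite cardsT card_ord -leqNgt.
  by move/leq_trans; apply; apply: leq_imset_card.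
have [h Hh [nth Nh]] := ntN j0.
have : graph_perm h \in stab coset_graph S.
  apply/stabP; split=> [|v Sv]; first exact: graph_perm_aut.
  have v_j0 : vertex_block v != j0 by apply: contraNneq S_j0 => <-; apply: imset_f.
  rewrite graph_permE; case: v Sv v_j0 => [x|g] _ /= v_j0; first by rewrite coset_act_fix ?Nh.
  congr inr; apply: gadget_vertex_inj => //.
  by rewrite garc_act !coset_act_fix ?Nh -?vblock_garc // -surjective_pairing.
rewrite stS1 => /set1P/eqP; apply/negP.
by rewrite -(morph1 graph_perm_morphism) (inj_in_eq (injmP graph_perm_injm)) ?group1.
Qed.

Lemma fixing_number_coset_graph : fixing_number coset_graph k.
Proof.
split=> [|S]; last exact: card_ge_stab_trivial.
exists [set inl (base_vertex j) | j : 'I_k]; split; first exact: stab_base_vertices.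
by rewrite card_imset ?card_ord // => i j e; apply: (congr1 vblock (inl_inj e)).
Qed.

End CosetGraph.

Lemma fix_set_coset_coordinates (gT : finGroupType) (H : {group gT}) k
    (N : 'I_k -> {group gT}) :
  (forall j, N j <| H) -> coset_coordinates H N -> fix_set H k.
Proof.
move=> nsNH coords; exists (vertex H N), (@coset_graph gT H k N); split.
  exact: coset_graph_simple.
by split; [apply: aut_coset_graph_isog | apply: fixing_number_coset_graph].
Qed.

Unset Implicit Arguments.

Theorem corollary1 (gT : finGroupType) (H Q A : {group gT}) (d : nat) :
  Q \x A = H ->
  Q \isog 'Q_8 ->
  abelian A ->
  (forall a, a \in A -> #[a] != 4%N) ->
  hamiltonian H ->
  num_elementary_divisors A d ->
  forall k : nat, fix_set H k <-> (1 <= k <= d.+1)%N.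
Proof.
(* The conditions on A are what makes H hamiltonian, which is assumed anyway. *)
move=> defH isoQ _ _ [nabH nsH] ned k; split=> [fixk | k_range].
  have ntH : H :!=: 1 by apply: contraNneq nabH => ->; apply: abelian1.
  have [ps [ps_pr size_ps oOhm1]] := card_Ohm1_quaternion_dprod defH isoQ ned.
  by rewrite (fix_set_gt0 ntH fixk) -size_ps (fix_set_leq_Ohm1 nsH ps_pr oOhm1 fixk).
have [C [defA hC]] := ned.
have ntQ : Q :!=: 1.
  by rewrite -cardG_gt1 (card_isog isoQ) (card_quaternion (n := 3)).
have ntC i : C i :!=: 1.
  by have [_ [p [m [p_pr oC]]]] := hC i; apply: prime_power_group_nontrivial p_pr oC.
have [N coordsN] := coset_coordinates_bigdprod ntQ ntC defA defH k_range.
have [sNH _ _ _] := coordsN.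
by apply: fix_set_coset_coordinates coordsN => j; apply/nsH/sNH.
Qed.
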